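(* Let $A$ be an integral domain with a non-trivial $\mathbb{Z}$-grading and let $\alpha$ be a nonzero homogeneous element of $A$. Then there exist homogeneous elements $f\in\alpha A\setminus\{0\}$ and $w\in A_f^*$ such that $A_f=(A_f)_0[w,w^{-1}]$, and this ring is isomorphic to the Laurent polynomial ring in one variable over $(A_f)_0$.
   Context: $A_f$ is the localization of $A$ at the powers of $f$, with the $\mathbb{Z}$-grading extended from $A$; $(A_f)_0$ is its subring of degree-zero elements. *)

From HB Require Import structures.
From mathcomp Require Import all_boot all_order all_algebra.
Set Implicit Arguments. Unset Strict Implicit. Unset Printing Implicit Defensive.
Import Order.TTheory GRing.Theory Num.Theory.
Local Open Scope ring_scope.

(* A Z-grading of a commutative ring A: a family (A_d)_{d : int} of additive
   subgroups with A_d * A_e ⊆ A_{d+e} and A = ⊕_d A_d (internal direct sum). *)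
Definition Zgrading (A : comNzRingType) (G : int -> {pred A}) : Prop :=
  [/\ (forall d, GRing.zmod_closed (G d)),
      (forall d e a b, a \in G d -> b \in G e -> a * b \in G (d + e)),
      (forall a : A, exists (s : seq int) (x : int -> A),
          (forall d, x d \in G d) /\ a = \sum_(d <- s) x d)
    & (forall (s : seq int) (x : int -> A), uniq s ->
          (forall d, x d \in G d) -> \sum_(d <- s) x d = 0 ->
          forall d, d \in s -> x d = 0)].

Definition nontrivial_grading (A : comNzRingType) (G : int -> {pred A}) : Prop :=
  exists d : int, d != 0 /\ exists a, a \in G d /\ a != 0.

Definition homogeneous (A : comNzRingType) (G : int -> {pred A}) (a : A) : Prop :=
  exists d, a \in G d.

(* For an integral domain A and f in A, f <> 0, the localization A_f is
   realised as the subring A[1/f] of the fraction field {fraction A}. *)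
Definition loc (A : idomainType) (f : A) (x : {fraction A}) : Prop :=
  exists (a : A) (n : nat), x = tofrac a / (tofrac f) ^+ n.

Definition loc_hom (A : idomainType) (G : int -> {pred A}) (f : A) (k : int)
    (x : {fraction A}) : Prop :=
  exists d : int, f \in G d /\
  exists (a : A) (n : nat), a \in G (k + n%:Z * d) /\ x = tofrac a / (tofrac f) ^+ n.

Definition loc0 (A : idomainType) (G : int -> {pred A}) (f : A) :=
  loc_hom G f 0.

From HB Require Import structures.
From mathcomp Require Import all_boot all_order all_algebra.
From mathcomp Require Import ring zify.
From Stdlib Require Import Classical.
Set Implicit Arguments. Unset Strict Implicit. Unset Printing Implicit Defensive.
Import Order.TTheory GRing.Theory Num.Theory.
Local Open Scope ring_scope.

Local Notation "x %:F" := (tofrac x).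

(* The degrees d1 - d2 of quotients of nonzero homogeneous elements form a nonzero
   subgroup eZ of Z with e > 0; pick nonzero homogeneous g1, g2 with
   deg g1 - deg g2 = e and put f = alpha g1 g2, u = alpha g1^2, v = alpha g2^2, so
   that u v = f^2.  Then w = u / f (= g1 / g2) is a unit of A_f of degree e with
   inverse v / f.  A homogeneous b / f^n has degree k e for some integer k, and
   b / f^n = c w^k with c = b v^k / f^(n+k) if k >= 0, c = b u^(-k) / f^(n-k) if
   k < 0, both of degree 0; hence A_f = (A_f)_0[w, w^-1].  A relation
   sum_i c_i w^i = 0 with c_i in (A_f)_0 becomes, after clearing denominators, a
   vanishing sum of homogeneous elements of A of pairwise distinct degrees, so all
   c_i vanish. *)

Section IntSubgroup.
Variable P : int -> Prop.
Hypothesis PB : forall x y, P x -> P y -> P (x - y).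

Lemma int_subgroupMz x q : P x -> P (q * x).
Proof.
move=> Px; have P0 : P 0 by rewrite -(subrr x); apply: PB.
have PN y : P y -> P (- y) by rewrite -sub0r; apply: PB.
elim/int_rec: q => [|n IH|n IH]; first by rewrite mul0r.
- by rewrite -addn1 PoszD mulrDl mul1r -[_ + x]opprK opprD; apply/PN/PB/Px/PN.
- by rewrite -addn1 PoszD opprD mulrDl mulN1r; apply: PB.
Qed.

Lemma int_subgroup_generator d : P d -> d != 0 ->
  exists2 e, 0 < e & P e /\ forall x, P x -> (e %| x)%Z.
Proof.
move: {2}`|d|%N (leqnn `|d|%N) => n; elim: n d => [|n IH] d.
  by rewrite leqn0 absz_eq0 => /eqP->; rewrite eqxx.
move=> dn Pd d0.
case: (classic (forall x, P x -> (d %| x)%Z)) => [dvd_d | ].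
  exists `|d|%:Z; first by rewrite ltz_nat absz_gt0.
  split=> [|x /dvd_d //]; rewrite abszE; have [//|_] := ger0P d.
  by rewrite -mulN1r; apply: int_subgroupMz.
move=> /not_all_ex_not [x /(imply_to_and (P x)) [Px ndx]].
apply: (IH (x %% d)%Z).
- by move: (x %% d)%Z (ltz_mod x d0) (modz_ge0 x d0) dn => r; lia.
- have -> : (x %% d)%Z = x - (x %/ d)%Z * d by rewrite {2}(divz_eq x d) addrC addKr.
  exact/PB/int_subgroupMz.
- by apply/eqP => /dvdz_mod0P.
Qed.
End IntSubgroup.

Section Grading.
Variables (A : comNzRingType) (G : int -> {pred A}).
Hypothesis HG : Zgrading G.

Lemma grade0 d : 0 \in G d.
Proof. by case: HG => /(_ d) []. Qed.

Lemma gradeB d a b : a \in G d -> b \in G d -> a - b \in G d.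
Proof. by case: HG => /(_ d) [_ GB] _ _ _; apply: GB. Qed.

Lemma gradeN d a : a \in G d -> - a \in G d.
Proof. by rewrite -sub0r; apply/gradeB/grade0. Qed.

Lemma gradeD d a b : a \in G d -> b \in G d -> a + b \in G d.
Proof. by move=> Ga Gb; rewrite -[b]opprK; apply/gradeB/gradeN. Qed.

Lemma gradeM d e a b : a \in G d -> b \in G e -> a * b \in G (d + e).
Proof. by case: HG => _ GM _ _; apply: GM. Qed.

Lemma gradeMX d e a h n : a \in G d -> h \in G e -> a * h ^+ n \in G (d + n%:Z * e).
Proof.
move=> Ga Gh; elim: n => [|n IH]; first by rewrite mulr1 mul0r addr0.
rewrite exprSr mulrA -addn1 PoszD mulrDl mul1r addrA; exact: gradeM.
Qed.

Lemma grade_sum (I : Type) (r : seq I) (P : pred I) (F : I -> A) d :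
  (forall i, P i -> F i \in G d) -> \sum_(i <- r | P i) F i \in G d.
Proof. by move=> GF; elim/big_ind: _ => //; [exact: grade0 | exact: gradeD]. Qed.

Lemma grade_sum_eq0 (I : finType) (t : I -> A) (g : I -> int) :
  injective g -> (forall i, t i \in G (g i)) -> \sum_i t i = 0 -> forall i, t i = 0.
Proof.
move=> g_inj Gt sum_t0 i; case: HG => _ _ _ /(_ (map g (enum I))).
have tg j : \sum_(k | g k == g j) t k = t j.
  by rewrite (eq_bigl (pred1 j)) ?big_pred1_eq // => k; rewrite /= inj_eq.
move=> /(_ (fun d => \sum_(k | g k == d) t k) _ _ _ (g i)); rewrite tg; apply.
- by rewrite map_inj_uniq ?enum_uniq.
- by move=> d; apply: grade_sum => k /eqP <-.
- by rewrite big_map big_enum; under eq_bigr do rewrite tg.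
- by rewrite map_f ?mem_enum.
Qed.

Lemma grade_uniq a d d' : a != 0 -> a \in G d -> a \in G d' -> d = d'.
Proof.
move=> a0 Gd Gd'; apply/eqP; apply: contraNT a0 => dd'.
have g_inj : injective (fun b : bool => if b then d else d').
  by case; case=> //= /eqP; rewrite ?(negbTE dd') // eq_sym (negbTE dd').
apply/eqP/(grade_sum_eq0 (t := fun b : bool => if b then a else - a) g_inj _ _ true).
- by case=> //; apply: gradeN.
- by rewrite big_bool /= subrr.
Qed.
End Grading.

Lemma divX_mulX (K : fieldType) (x y : K) (n m : nat) :
  y != 0 -> (n <= m)%N -> x / y ^+ n * y ^+ m = x * y ^+ (m - n).
Proof. by move=> y0 nm; rewrite mulrAC -mulrA -expfB_cond // (negbTE y0). Qed.

Section SquareFactorization.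
Variables (K : fieldType) (f u v : K).
Hypotheses (f0 : f != 0) (uv : u * v = f ^+ 2).

Lemma ratio_mulV : u / f * (v / f) = 1.
Proof. by rewrite mulf_div uv divff // expf_neq0. Qed.

Lemma divX_mul_ratioX b n k : b / f ^+ n = b * v ^+ k / f ^+ (n + k) * (u / f) ^+ k.
Proof.
have u0 : u != 0 by apply: contra_neq (expf_neq0 2 f0); rewrite -uv => ->; rewrite mul0r.
have -> : v = f ^+ 2 / u by rewrite -uv mulrAC mulfV ?mul1r.
by rewrite exprD !exprMn !exprVn; field; rewrite !expf_neq0.
Qed.

Lemma divX_div_ratioX b n k : b / f ^+ n = b * u ^+ k / f ^+ (n + k) / (u / f) ^+ k.
Proof.
have v0 : v != 0 by apply: contra_neq (expf_neq0 2 f0); rewrite -uv => ->; rewrite mulr0.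
have -> : u = f ^+ 2 / v by rewrite -uv mulfK.
by rewrite exprD !exprMn !exprVn; field; rewrite !expf_neq0.
Qed.
End SquareFactorization.

Definition laurent (K : fieldType) (R : K -> Prop) (w x : K) :=
  exists (p : {poly K}) (m : nat), (forall i, R p`_i) /\ x = p.[w] / w ^+ m.

Section Laurent.
Variables (K : fieldType) (R : K -> Prop) (w : K).
Hypotheses (R0 : R 0) (RD : forall x y, R x -> R y -> R (x + y)) (w0 : w != 0).

Lemma laurent0 : laurent R w 0.
Proof. by exists 0, 0%N; rewrite horner0 mul0r; split=> // i; rewrite coef0. Qed.

Lemma laurentD x y : laurent R w x -> laurent R w y -> laurent R w (x + y).
Proof.
move=> [p [m [Rp ->]]] [q [n [Rq ->]]].
exists (p * 'X^n + q * 'X^m), (m + n)%N; split.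
  by move=> i; rewrite coefD !coefMXn; apply: RD; case: ifP.
by rewrite hornerD !hornerM !hornerXn exprD; field; rewrite !expf_neq0.
Qed.

Lemma laurentMX c k : R c -> laurent R w (c * w ^+ k).
Proof.
move=> Rc; exists (c *: 'X^k), 0%N; rewrite hornerZ hornerXn divr1; split=> // i.
by rewrite coefZ coefXn; case: eqP; rewrite ?mulr1 ?mulr0.
Qed.

Lemma laurentVX c k : R c -> laurent R w (c / w ^+ k).
Proof. by move=> Rc; exists c%:P, k; rewrite hornerC; split=> // i; rewrite coefC; case: eqP. Qed.

Lemma laurent_sub (S : K -> Prop) :
  S 0 -> S 1 -> (forall x y, S x -> S y -> S (x + y)) -> (forall x y, S x -> S y -> S (x * y)) ->
  (forall c, R c -> S c) -> S w -> S w^-1 ->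
  forall x, laurent R w x -> S x.
Proof.
move=> S0 S1 SD SM RS Sw Swinv x [p [m [Rp ->]]].
have SX y n : S y -> S (y ^+ n) by move=> Sy; elim: n => [|n IH]; rewrite ?exprS; auto.
rewrite -exprVn horner_coef; apply: (SM _ _ _ (SX _ _ Swinv)).
by apply: (big_ind S) => // i _; exact: (SM _ _ (RS _ (Rp i)) (SX _ _ Sw)).
Qed.
End Laurent.

Section DegreeGroup.
Variables (A : idomainType) (G : int -> {pred A}).
Hypothesis HG : Zgrading G.

Definition quot_deg (x : int) := exists d1 d2 (a b : A),
  [/\ a \in G d1, b \in G d2, a != 0, b != 0 & x = d1 - d2].

Lemma quot_degB x y : quot_deg x -> quot_deg y -> quot_deg (x - y).
Proof.
move=> [d1 [d2 [a [b [Ga Gb a0 b0 ->]]]]] [d1' [d2' [a' [b' [Ga' Gb' a0' b0' ->]]]]].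
exists (d1 + d2'), (d2 + d1'), (a * b'), (b * a').
by split; rewrite ?gradeM ?mulf_neq0 //; ring.
Qed.

Lemma quot_deg_generator : nontrivial_grading G ->
  exists2 e, 0 < e & quot_deg e /\ forall x, quot_deg x -> (e %| x)%Z.
Proof.
move=> [d [d0 [a [Ga a0]]]]; apply: (int_subgroup_generator quot_degB _ d0).
by exists (d + d), d, (a * a), a; split; rewrite ?gradeM ?mulf_neq0 //; ring.
Qed.
End DegreeGroup.

Section Localization.
Variables (A : idomainType) (f : A).
Hypothesis f0 : f != 0.

Lemma locD x y : loc f x -> loc f y -> loc f (x + y).
Proof.
move=> [a [n ->]] [b [m ->]]; exists (a * f ^+ m + b * f ^+ n), (n + m)%N.
by rewrite addf_div ?expf_neq0 ?tofrac_eq0 // tofracD !tofracM !tofracXn exprD.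
Qed.

Lemma locM x y : loc f x -> loc f y -> loc f (x * y).
Proof. by move=> [a [n ->]] [b [m ->]]; exists (a * b), (n + m)%N; rewrite mulf_div tofracM exprD. Qed.
End Localization.

Section DegreeZero.
Variables (A : idomainType) (G : int -> {pred A}) (f : A) (df : int).
Hypotheses (HG : Zgrading G) (Gf : f \in G df) (f0 : f != 0).

Lemma loc_homP k x :
  loc_hom G f k x <-> exists a n, a \in G (k + n%:Z * df) /\ x = a%:F / f%:F ^+ n.
Proof.
split=> [[d [Gd Hx]] | Hx]; last by exists df.
by rewrite (grade_uniq HG f0 Gd Gf) in Hx.
Qed.

Lemma loc_hom_loc k x : loc_hom G f k x -> loc f x.
Proof. by move=> [d [_ [a [n [_ ->]]]]]; exists a, n. Qed.

Lemma loc0_zero : loc0 G f 0.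
Proof. by apply/loc_homP; exists 0, 0%N; rewrite tofrac0 !mul0r grade0. Qed.

Lemma loc0D x y : loc0 G f x -> loc0 G f y -> loc0 G f (x + y).
Proof.
move=> /loc_homP [a [n [Ga ->]]] /loc_homP [b [m [Gb ->]]]; apply/loc_homP.
exists (a * f ^+ m + b * f ^+ n), (n + m)%N; split.
  rewrite PoszD mulrDl addrA.
  by apply: (gradeD HG); [|rewrite addrAC]; apply: gradeMX.
by rewrite addf_div ?expf_neq0 ?tofrac_eq0 // tofracD !tofracM !tofracXn exprD.
Qed.
End DegreeZero.

Section LaurentPresentation.
Variables (A : idomainType) (G : int -> {pred A}) (f u v : A) (df e : int).
Hypotheses (HG : Zgrading G) (Gf : f \in G df) (Gu : u \in G (df + e)) (Gv : v \in G (df - e)).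
Hypotheses (f0 : f != 0) (e0 : e != 0) (uv : u * v = f ^+ 2).
Hypothesis e_dvd : forall x, quot_deg G x -> (e %| x)%Z.

Let w := u%:F / f%:F.

Let fF0 : f%:F != 0. Proof. by rewrite tofrac_eq0. Qed.

Let uvF : u%:F * v%:F = f%:F ^+ 2. Proof. by rewrite -tofracM uv tofracXn. Qed.

Let u0 : u != 0.
Proof. by move: (expf_neq0 2 f0); rewrite -uv mulf_eq0 negb_or => /andP[]. Qed.

Lemma loc_ratio_hom : loc_hom G f e w.
Proof. by apply/(loc_homP HG Gf f0); exists u, 1%N; rewrite expr1 mul1r addrC. Qed.

Lemma loc_ratio_mulV : w * (v%:F / f%:F) = 1.
Proof. exact: ratio_mulV fF0 uvF. Qed.

Let w0 : w != 0. Proof. by rewrite mulf_neq0 ?invr_eq0 ?tofrac_eq0. Qed.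

Lemma laurent_frac_hom b d n : b \in G d -> laurent (loc0 G f) w (b%:F / f%:F ^+ n).
Proof.
move=> Gb; have [->|b0] := eqVneq b 0.
  by rewrite tofrac0 mul0r; apply/laurent0/(loc0_zero HG Gf f0).
have [q Ed] : exists q, d = n%:Z * df + q * e.
  have /dvdzP [q Eq] : (e %| d - n%:Z * df)%Z.
    apply: e_dvd; exists (d + df), (df + n%:Z * df), (b * f), (f * f ^+ n).
    by split; rewrite ?gradeMX ?gradeM ?mulf_neq0 ?expf_neq0 //; ring.
  by exists q; rewrite -Eq; ring.
case: q Ed => k Ed.
- rewrite (divX_mul_ratioX fF0 uvF _ _ k) -tofracXn -tofracM.
  apply: (laurentMX _ (loc0_zero HG Gf f0)); apply/(loc_homP HG Gf f0).
  exists (b * v ^+ k), (n + k)%N; split=> //.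
  have -> : 0 + (n + k)%N%:Z * df = d + k%:Z * (df - e) by rewrite Ed PoszD; ring.
  exact: gradeMX.
- rewrite (divX_div_ratioX fF0 uvF _ _ k.+1) -tofracXn -tofracM.
  apply: (laurentVX _ (loc0_zero HG Gf f0)); apply/(loc_homP HG Gf f0).
  exists (b * u ^+ k.+1), (n + k.+1)%N; split=> //.
  have -> : 0 + (n + k.+1)%N%:Z * df = d + k.+1%:Z * (df + e) by rewrite Ed NegzE PoszD; ring.
  exact: gradeMX.
Qed.

Lemma loc_laurent x : loc f x -> laurent (loc0 G f) w x.
Proof.
move=> [a [n ->]]; case: HG => _ _ /(_ a) [s [xs [Gxs ->]]] _.
rewrite rmorph_sum mulr_suml; apply: (big_ind (laurent _ w)).
- exact/laurent0/(loc0_zero HG Gf f0).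
- exact/laurentD/w0/(loc0D HG Gf f0)/(loc0_zero HG Gf f0).
- by move=> d _; apply: laurent_frac_hom (Gxs d).
Qed.

Lemma laurent_loc x : laurent (loc0 G f) w x -> loc f x.
Proof.
apply: laurent_sub.
- by exists 0, 0%N; rewrite tofrac0 mul0r.
- by exists 1, 0%N; rewrite tofrac1 divr1.
- exact: locD.
- exact: locM.
- by move=> c /loc_hom_loc.
- by exists u, 1%N; rewrite expr1.
- by rewrite (mulr1_eq loc_ratio_mulV); exists v, 1%N; rewrite expr1.
Qed.

Lemma laurent_inj (p : {poly {fraction A}}) :
  (forall i, loc0 G f p`_i) -> p.[w] = 0 -> p = 0.
Proof.
move=> Rp pw0; set M := size p.
have /fin_all_exists [h Eh] : forall i : 'I_M, exists an : A * nat,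
    an.1 \in G (an.2%:Z * df) /\ p`_i = an.1%:F / f%:F ^+ an.2.
  by move=> i; have /(loc_homP HG Gf f0) [a [n]] := Rp i; rewrite add0r; exists (a, n).
pose N := (\sum_(i < M) (h i).2)%N.
have leN i : ((h i).2 <= N)%N by rewrite /N (bigD1 i) //= leq_addr.
(* Multiplying p.[w] by f^(N + M) turns its i-th term into the element t i of A,
   homogeneous of degree (N + M) df + i e; these degrees are pairwise distinct. *)
pose t (i : 'I_M) := (h i).1 * f ^+ (N - (h i).2) * u ^+ i * f ^+ (M - i).
have Gt i : t i \in G ((N + M)%:Z * df + i%:Z * e).
  rewrite (_ : _ + _ = (h i).2%:Z * df + (N - (h i).2)%N%:Z * df + i%:Z * (df + e)
                        + (M - i)%N%:Z * df).
    by do 3!apply: (gradeMX HG) => //; exact: (Eh i).1.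
  by rewrite -!subzn ?leN 1?ltnW //; ring.
have deg_inj : injective (fun i : 'I_M => (N + M)%:Z * df + i%:Z * e).
  by move=> i j /addrI /(mulIf e0) /eqP; rewrite eqz_nat => /eqP /ord_inj.
have sum_t : \sum_i t i = 0.
  apply/eqP; rewrite -tofrac_eq0 (big_morph _ (@tofracD A) (@tofrac0 A)); apply/eqP.
  transitivity (p.[w] * (f%:F ^+ N * f%:F ^+ M)); last by rewrite pw0 mul0r.
  rewrite horner_coef mulr_suml; apply: eq_bigr => i _.
  rewrite (Eh i).2 expr_div_n mulrACA !divX_mulX // 1?ltnW //.
  by rewrite !tofracM !tofracXn !mulrA.
apply/polyP => i; rewrite coef0; case: (ltnP i M) => iM; last by rewrite nth_default.
have /eqP := grade_sum_eq0 HG deg_inj Gt sum_t (Ordinal iM).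
rewrite !mulf_eq0 !expf_eq0 (negbTE f0) (negbTE u0) !andbF !orbF => /eqP h0.
by rewrite (Eh (Ordinal iM)).2 h0 tofrac0 mul0r.
Qed.
End LaurentPresentation.

Theorem lemma2p10 (A : idomainType) (G : int -> {pred A}) (alpha : A) :
  Zgrading G -> nontrivial_grading G ->
  homogeneous G alpha -> alpha != 0 ->
  exists (f : A) (w : {fraction A}),
    [/\ homogeneous G f, (exists b : A, f = alpha * b) & f != 0] /\
        (* w is a homogeneous unit of A_f *)
        (exists k : int, loc_hom G f k w) /\
        (exists v, loc f v /\ w * v = 1) /\
        (* A_f = (A_f)_0[w, w^-1] *)
        (forall x, loc f x <->
           exists (p : {poly {fraction A}}) (m : nat),
             (forall i, loc0 G f p`_i) /\ x = p.[w] / w ^+ m) /\ (* the canonical map (A_f)_0[t, t^-1] -> A_f, t |-> w, is injective,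
           hence an isomorphism with the Laurent polynomial ring *)
        (forall p : {poly {fraction A}}, (forall i, loc0 G f p`_i) ->
           p.[w] = 0 -> p = 0).
Proof.
move=> HG Hnt [da Ga] a0.
have [e e_gt0 [[d1 [d2 [g1 [g2 [Gg1 Gg2 g10 g20 Ee]]]]] e_dvd]] := quot_deg_generator HG Hnt.
have e0 : e != 0 by rewrite gt_eqF.
pose f := alpha * (g1 * g2); pose u := alpha * (g1 * g1); pose v := alpha * (g2 * g2).
have Gf : f \in G (da + (d1 + d2)) by rewrite !gradeM.
have Gu : u \in G (da + (d1 + d2) + e).
  by rewrite (_ : _ + e = da + (d1 + d1)) ?gradeM // Ee; ring.
have Gv : v \in G (da + (d1 + d2) - e).
  by rewrite (_ : _ - e = da + (d2 + d2)) ?gradeM // Ee; ring.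
have f0 : f != 0 by rewrite !mulf_neq0.
have uv : u * v = f ^+ 2 by rewrite /u /v /f; ring.
exists f, (u%:F / f%:F); split; first by split; [exists (da + (d1 + d2)) | exists (g1 * g2) |].
split; first by exists e; apply: loc_ratio_hom HG Gf Gu f0.
split; first by exists (v%:F / f%:F); split; [exists v, 1%N; rewrite expr1 | apply: loc_ratio_mulV f0 uv].
split; last exact: laurent_inj HG Gf Gu f0 e0 uv.
move=> x; split=> [Lx | Rx]; first exact: (loc_laurent HG Gf Gu Gv f0 uv e_dvd Lx).
exact: (laurent_loc f0 uv Rx).
Qed.
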